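(* Let $a\in K$ be such that $K$ is finite-dimensional as a right vector space over $C(a)=\{b\in K^*:{}^{b}a=a\}\cup\{0\}$. Then a skew rational function with minimal representation $P(T)^{-1}Q(T)$ is defined at $a$ if and only if $P(c)\neq0$ for all $c\in\Delta(a)$.
   Context: Let $K$ be a skew field, $K^*=K\setminus\{0\}$, $\sigma\colon K\to K$ a ring endomorphism and $\delta\colon K\to K$ a $\sigma$-derivation. $K[T;\sigma,\delta]$ is the skew polynomial ring with $Ta=\sigma(a)T+\delta(a)$. The $(\sigma,\delta)$-action of $K^*$ on $K$ is ${}^{b}a=\sigma(b)ab^{-1}+\delta(b)b^{-1}$; $\Delta(a)=\{{}^{b}a:b\in K^*\}$. $C(a)$ is a skew subfield of $K$. For $P\in K[T;\sigma,\delta]$ and $a\in K$, $P(a)$ is the unique element of $K$ with $P(T)-P(a)\in K[T;\sigma,\delta](T-a)$. For a set $Z$ with a $K^*$-action, the skew product of functions $Z\to K$ is $(f\diamond g)(z)=f({}^{g(z)}z)g(z)$ if $g(z)\neq0$, $0$ otherwise; $f$ is skew invertible if some $g$ satisfies $f\diamond g=g\diamond f=1$. $K(T;\sigma,\delta)$ is the division ring of left fractions of $K[T;\sigma,\delta]$; each $f$ has a unique minimal representation $P(T)^{-1}Q(T)$ with $P$ monic of least degree; $f$ is defined at $a$ if the function $\Delta(a)\to K$, $c\mapsto P(c)$, is skew invertible. *)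

From HB Require Import structures.
From mathcomp Require Import all_boot all_order all_algebra.
From Stdlib Require Import ClassicalEpsilon.
Set Implicit Arguments. Unset Strict Implicit. Unset Printing Implicit Defensive.
Import GRing.Theory.
Local Open Scope ring_scope.

(* Skew polynomials in K[T; sigma, delta] are represented by their sequence of
   LEFT coefficients (P = sum_i p_i T^i), stored in the additive group {poly K}.
   The multiplication of {poly K} is NOT used as the skew product; the skew
   product is [skmul] below. *)

Section Skew.
Variable K : unitRingType.
Variable sigma : {rmorphism K -> K}.
Variable delta : K -> K.

Definition is_skew_field := forall x : K, x != 0 -> x \is a GRing.unit.

(* delta is a sigma-derivation: additive, delta(xy) = sigma(x) delta(y) + delta(x) y
   (the convention forced by T a = sigma(a) T + delta(a)). *)
Definition is_sigma_derivation :=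
  (forall x y : K, delta (x + y) = delta x + delta y) /\
  (forall x y : K, delta (x * y) = sigma x * delta y + delta x * y).

Definition skact (b a : K) : K := sigma b * a * b^-1 + delta b * b^-1.

Definition in_Delta (a c : K) : Prop := exists2 b : K, b != 0 & c = skact b a.

Definition in_C (a b : K) : Prop := (b != 0 /\ skact b a = a) \/ b = 0.

Definition right_findim_over (C : K -> Prop) : Prop :=
  exists s : seq K, forall x : K, exists cs : seq K,
    [/\ size cs = size s, (forall i, (i < size s)%N -> C cs`_i) &
        x = \sum_(i < size s) s`_i * cs`_i].

(* left multiplication by T:  T (sum b_i T^i) = sum (sigma b_i T^(i+1) + delta b_i T^i) *)
Definition mulT (p : {poly K}) : {poly K} := map_poly sigma p * 'X + map_poly delta p.

Definition skmul (p q : {poly K}) : {poly K} :=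
  \sum_(i < size p) (p`_i)%:P * iter i mulT q.

Definition skeval (p : {poly K}) (a : K) : K :=
  epsilon (inhabits 0) (fun r => exists q : {poly K}, p = skmul q ('X - a%:P) + r%:P).

(* skew product of functions Delta(a) -> K (functions are given on all of K,
   only their values on the invariant set Z matter) *)
Definition skprod (f g : K -> K) (z : K) : K :=
  if g z == 0 then 0 else f (skact (g z) z) * g z.

Definition skew_invertible (Z : K -> Prop) (f : K -> K) : Prop :=
  exists g : K -> K, forall z, Z z -> skprod f g z = 1 /\ skprod g f z = 1.

(* P^-1 Q = P'^-1 Q' in the division ring of left fractions K(T;sigma,delta)
   (left Ore localization): there are nonzero U, U' with U P = U' P', U Q = U' Q'. *)
Definition same_fraction (P Q P' Q' : {poly K}) : Prop :=
  exists U U' : {poly K},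
    [/\ U != 0, U' != 0, skmul U P = skmul U' P' & skmul U Q = skmul U' Q'].

Definition minimal_rep (P Q : {poly K}) : Prop :=
  P \is monic /\
  forall P' Q' : {poly K}, P' != 0 -> same_fraction P Q P' Q' -> (size P <= size P')%N.

Definition defined_at (P : {poly K}) (a : K) : Prop :=
  skew_invertible (in_Delta a) (fun c => skeval P c).

End Skew.

(* Write Delta(a) as the orbit {^b a} and put lambda(b) := P(^b a) b.  Since
   P(c) = sum_i P_i N_i(c) and N_i(^b a) b = T_a^i(b) for the pseudo-linear map
   T_a(x) = sigma(x) a + delta(x), lambda is additive; as ^(b c) a = ^b a for c
   in C(a), it is moreover right C(a)-linear.  If P vanishes nowhere on Delta(a),
   lambda has trivial kernel, so by finite dimensionality it is bijective (if y
   were not in its image, y, lambda y, lambda^2 y, ... would be right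
   independent).  A skew inverse of P on Delta(a) then sends ^u a to x u^-1,
   where lambda(x) = u; injectivity of lambda shows that it is a two-sided
   inverse.  Conversely a skew invertible function cannot vanish. *)

From mathcomp Require Import all_boot all_algebra.
From Stdlib Require Import ClassicalEpsilon Classical.
Set Implicit Arguments. Unset Strict Implicit. Unset Printing Implicit Defensive.
Import GRing.Theory.
Local Open Scope ring_scope.

Section RightLinearAlgebra.
Variable K : unitRingType.
Hypothesis HK : is_skew_field K.
Variable C : K -> Prop.
Hypothesis C0 : C 0.
Hypothesis C1 : C 1.
Hypothesis CD : forall x y, C x -> C y -> C (x + y).
Hypothesis CN : forall x, C x -> C (- x).
Hypothesis CM : forall x y, C x -> C y -> C (x * y).
Hypothesis CV : forall x, C x -> C x^-1.

Lemma C_sum (I : Type) (r : seq I) (F : I -> K) : (forall i, C (F i)) -> C (\sum_(i <- r) F i).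
Proof. by move=> FC; apply: big_ind. Qed.

Lemma homogeneous_underdetermined_nontrivial n (c : 'I_n.+1 -> nat -> K) :
  (forall i j, (j < n)%N -> C (c i j)) ->
  exists d : 'I_n.+1 -> K, [/\ forall i, C (d i), exists i, d i != 0 &
    forall j, (j < n)%N -> \sum_i c i j * d i = 0].
Proof.
elim: n c => [|n IHn] c cC.
  by exists (fun=> 1); split=> //; exists ord0; exact: oner_neq0.
(* Gaussian elimination on the last equation: its coefficients are left
   multiples [c i0 n * e i] of one of them. *)
have [i0 [e [eC ce]]] : exists i0 (e : 'I_n.+1 -> K),
    (forall i, C (e i)) /\ forall i, c (lift i0 i) n = c i0 n * e i.
  case: (pickP (fun i => c i n != 0)) => [i0 ci0|cn0].
    exists i0, (fun i => (c i0 n)^-1 * c (lift i0 i) n); split=> i.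
      by apply: CM; [apply: CV|]; apply: cC.
    by rewrite mulVKr ?HK.
  exists ord0, (fun=> 0); split=> // i.
  by move: (cn0 (lift ord0 i)) => /negbFE/eqP->; rewrite mulr0.
pose c' i j := c (lift i0 i) j - c i0 j * e i.
have c'C i j : (j < n)%N -> C (c' i j).
  move=> /ltnW jn; apply: CD; first exact: cC.
  by apply/CN/CM; [exact: cC | exact: eC].
have [d' [d'C [i d'i] d'sol]] := IHn c' c'C.
pose d k := if unlift i0 k is Some i then d' i else - \sum_i e i * d' i.
have sum_d (F : 'I_n.+2 -> K) :
    \sum_k F k * d k = \sum_i (F (lift i0 i) - F i0 * e i) * d' i.
  rewrite (bigD1_ord i0) //= /d unlift_none mulrN mulr_sumr -sumrN -big_split /=.
  by apply: eq_bigr => k _; rewrite liftK mulrBl mulrA addrC.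
exists d; split.
- move=> k; rewrite /d; case: unlift => [k'|]; first exact: d'C.
  by apply/CN/C_sum => k'; apply: CM.
- by exists (lift i0 i); rewrite /d liftK.
move=> j; rewrite ltnS leq_eqVlt => /orP[/eqP->|jn]; rewrite sum_d; last exact: d'sol.
by apply: big1 => k _; rewrite ce subrr mul0r.
Qed.

Section InjectiveEndomorphism.
Variable lam : K -> K.
Hypothesis lamD : forall x y, lam (x + y) = lam x + lam y.
Hypothesis lamC : forall x c, C c -> lam (x * c) = lam x * c.
Hypothesis lam_eq0 : forall x, lam x = 0 -> x = 0.

Let lam0 : lam 0 = 0.
Proof. by apply: (addrI (lam 0)); rewrite -lamD !addr0. Qed.

Let lamN x : lam (- x) = - lam x.
Proof. by apply: (addrI (lam x)); rewrite -lamD !subrr lam0. Qed.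

Lemma iterates_free (y : K) : ~ (exists x, lam x = y) ->
  forall m (d : 'I_m -> K), (forall i, C (d i)) ->
  \sum_(i < m) iter i lam y * d i = 0 -> forall i, d i = 0.
Proof.
move=> ny; elim=> [|m IHm] d dC; first by move=> _ [].
pose S := \sum_(i < m) iter i lam y * d (lift ord0 i).
have lamS : \sum_(i < m) iter (lift ord0 i) lam y * d (lift ord0 i) = lam S.
  by rewrite (big_morph _ lamD lam0); apply: eq_bigr => i _; rewrite lamC ?lift0.
rewrite big_ord_recl /= lamS => sum0.
have d0 : d ord0 = 0.
  case: (eqVneq (d ord0) 0) => // d00; case: ny.
  exists (- S * (d ord0)^-1); rewrite lamC; last exact/CV/dC.
  rewrite lamN.
  by move/eqP: sum0; rewrite addr_eq0 => /eqP <-; rewrite mulrK ?HK.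
move: sum0; rewrite d0 mulr0 add0r => /lam_eq0 S0 i.
by case: (unliftP ord0 i) => [j ->|->] //; exact: (IHm _ (fun j => dC _) S0).
Qed.

Lemma findim_injective_surjective : right_findim_over C -> forall y, exists x, lam x = y.
Proof.
move=> [s coord] y; apply: NNPP => ny.
pose coordP x cs := [/\ size cs = size s, forall i, (i < size s)%N -> C cs`_i &
    x = \sum_(i < size s) s`_i * cs`_i].
pose cs x := epsilon (inhabits [::]) (coordP x).
have csP x : coordP x (cs x) by apply: epsilon_spec; apply: coord.
pose c (i : 'I_(size s).+1) j := (cs (iter i lam y))`_j.
have cC i j : (j < size s)%N -> C (c i j) by have [_ + _] := csP (iter i lam y); apply.
have [d [dC [i di] dsol]] := homogeneous_underdetermined_nontrivial cC.
have : \sum_(i < (size s).+1) iter i lam y * d i = 0.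
  transitivity (\sum_(j < size s) s`_j * \sum_i c i j * d i).
    rewrite (eq_bigr (fun k => \sum_(j < size s) s`_j * (c k j * d k))) => [|k _].
      by rewrite exchange_big; apply: eq_bigr => j _; rewrite mulr_sumr.
    have [_ _ {1}->] := csP (iter k lam y).
    by rewrite mulr_suml; apply: eq_bigr => j _; rewrite mulrA.
  by apply: big1 => j _; rewrite dsol ?mulr0.
by move/(iterates_free ny dC)/(_ i)/eqP; rewrite (negbTE di).
Qed.

End InjectiveEndomorphism.

End RightLinearAlgebra.

Section SkewPolynomialRing.
Variable K : unitRingType.
Variable sigma : {rmorphism K -> K}.
Variable delta : K -> K.
Hypothesis HK : is_skew_field K.
Hypothesis Hdelta : is_sigma_derivation sigma delta.

Local Notation skact := (skact sigma delta).

Lemma unit_skew (x : K) : x != 0 -> x \is a GRing.unit.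
Proof. exact: HK. Qed.

Lemma mulf_skew_neq0 (x y : K) : x != 0 -> y != 0 -> x * y != 0.
Proof.
move=> x0 y0; apply: contraNneq y0 => xy0.
by rewrite -(mulKr (unit_skew x0) y) xy0 mulr0.
Qed.

Lemma deltaD (x y : K) : delta (x + y) = delta x + delta y.
Proof. by case: Hdelta. Qed.

Lemma deltaM (x y : K) : delta (x * y) = sigma x * delta y + delta x * y.
Proof. by case: Hdelta. Qed.

Lemma delta0 : delta 0 = 0.
Proof. by apply: (addrI (delta 0)); rewrite -deltaD !addr0. Qed.

Lemma deltaN (x : K) : delta (- x) = - delta x.
Proof. by apply: (addrI (delta x)); rewrite -deltaD !subrr delta0. Qed.

Lemma delta1 : delta 1 = 0.
Proof.
have := deltaM 1 1; rewrite mulr1 rmorph1 mul1r mulr1 => h.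
by apply: (addrI (delta 1)); rewrite addr0 -{1}h.
Qed.

Lemma skact1 (z : K) : skact 1 z = z.
Proof. by rewrite /skact rmorph1 delta1 invr1 !mulr1 mul1r addr0. Qed.

Lemma skactM (x y z : K) : x != 0 -> y != 0 -> skact x (skact y z) = skact (x * y) z.
Proof.
move=> x0 y0; rewrite /skact deltaM rmorphM invrM ?unit_skew //.
rewrite mulrDr mulrDl !mulrA mulrDl ?mulrA.
by rewrite mulrK ?unit_skew // -addrA mulrDl.
Qed.

Definition pseudo_lin (a x : K) : K := sigma x * a + delta x.

Lemma pseudo_linD (a x y : K) : pseudo_lin a (x + y) = pseudo_lin a x + pseudo_lin a y.
Proof. by rewrite /pseudo_lin rmorphD deltaD mulrDl addrACA. Qed.

Lemma iter_pseudo_linD (a : K) i x y :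
  iter i (pseudo_lin a) (x + y) = iter i (pseudo_lin a) x + iter i (pseudo_lin a) y.
Proof. by elim: i => [|i IHi] //=; rewrite IHi pseudo_linD. Qed.

Lemma iter_pseudo_lin0 (a : K) i : iter i (pseudo_lin a) 0 = 0.
Proof. by apply: (addrI (iter i (pseudo_lin a) 0)); rewrite -iter_pseudo_linD !addr0. Qed.

Lemma in_CP (a b : K) : in_C sigma delta a b <-> pseudo_lin a b = a * b.
Proof.
rewrite /in_C /pseudo_lin /skact -mulrDl; split.
  case=> [[b0 ba]|->]; first by rewrite -{2}ba divrK ?unit_skew.
  by rewrite raddf0 delta0 mul0r mulr0 addr0.
case: (eqVneq b 0) => [-> _|b0 ->]; [by right | by left; rewrite mulrK ?unit_skew].
Qed.

Section Centralizer.
Variable a : K.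
Local Notation C := (in_C sigma delta a).

Lemma in_C0 : C 0.
Proof. by right. Qed.

Lemma in_C1 : C 1.
Proof. by left; rewrite oner_neq0 skact1. Qed.

Lemma in_CD (x y : K) : C x -> C y -> C (x + y).
Proof. by rewrite !in_CP pseudo_linD mulrDr => -> ->. Qed.

Lemma in_CN (x : K) : C x -> C (- x).
Proof. by rewrite !in_CP /pseudo_lin rmorphN deltaN mulNr -opprD mulrN => ->. Qed.

Lemma in_CM (x y : K) : C x -> C y -> C (x * y).
Proof.
case=> [[x0 xa]|->]; last by rewrite mul0r; right.
case=> [[y0 ya]|->]; last by rewrite mulr0; right.
by left; rewrite mulf_skew_neq0 // -skactM // ya.
Qed.

Lemma in_CV (x : K) : C x -> C x^-1.
Proof.
case=> [[x0 xa]|->]; last by rewrite invr0; right.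
left; rewrite invr_eq0 x0 -{1}xa skactM ?invr_eq0 //.
by rewrite mulVr ?unit_skew // skact1.
Qed.

End Centralizer.

Local Notation in_Delta := (in_Delta sigma delta).

Lemma skew_invertible_neq0 (Z : K -> Prop) (f : K -> K) :
  skew_invertible sigma delta Z f -> forall z, Z z -> f z != 0.
Proof.
move=> [g gf] z /gf[_]; rewrite /skprod.
by case: eqP => // _ /esym/eqP; rewrite oner_eq0.
Qed.

Section OrbitInverse.
Variables (a : K) (f : K -> K).
Hypothesis f_neq0 : forall c, in_Delta a c -> f c != 0.
Hypothesis orbit_inj : forall x y : K, x != 0 -> y != 0 ->
  f (skact x a) * x = f (skact y a) * y -> x = y.
Hypothesis orbit_surj : forall y : K, y != 0 -> exists2 x : K, x != 0 & f (skact x a) * x = y.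

Lemma skew_invertible_of_orbit : skew_invertible sigma delta (in_Delta a) f.
Proof.
have rinv z : in_Delta a z -> exists w : K, w != 0 /\ f (skact w z) * w = 1.
  case=> u u0 ->; have [x x0 fx] := orbit_surj u0.
  exists (x * u^-1); split; first by rewrite mulf_skew_neq0 ?invr_eq0.
  rewrite skactM ?mulf_skew_neq0 ?invr_eq0 //.
  by rewrite divrK ?unit_skew // mulrA fx mulrV ?unit_skew.
pose g z := epsilon (inhabits 0) (fun w : K => w != 0 /\ f (skact w z) * w = 1).
have gP z : in_Delta a z -> g z != 0 /\ f (skact (g z) z) * g z = 1.
  by move=> /rinv; apply: epsilon_spec.
exists g => z zD; have [gz0 fgz] := gP z zD; have fz0 := f_neq0 zD.
rewrite /skprod (negbTE gz0) (negbTE fz0); split => //.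
move: zD fz0 => [u u0 ->] fz0.
set v := f _ in fz0 *.
have z'D : in_Delta a (skact v (skact u a)).
  by exists (v * u); rewrite ?skactM // mulf_skew_neq0.
have [w0 fw] := gP _ z'D; set w := g _ in w0 fw *.
have : w * v * u = u.
  apply: orbit_inj; rewrite ?mulf_skew_neq0 //.
  by rewrite -!skactM ?mulf_skew_neq0 // !mulrA fw mul1r.
by move/(canRL (mulrK (unit_skew u0))); rewrite mulrV ?unit_skew.
Qed.

End OrbitInverse.

Local Notation mT := (mulT sigma delta).
Local Notation skm := (skmul sigma delta).

Lemma coef_mulT (p : {poly K}) i :
  (mT p)`_i = (if i is j.+1 then sigma p`_j else 0) + delta p`_i.
Proof.
have cs j : (map_poly sigma p)`_j = sigma p`_j by rewrite coef_map_id0 ?rmorph0.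
have cd j : (map_poly delta p)`_j = delta p`_j by rewrite coef_map_id0 ?delta0.
by rewrite /mulT coefD coefMX cd; case: i => [|i] //=; rewrite cs.
Qed.

Lemma size_mulT (p : {poly K}) : (size (mT p) <= (size p).+1)%N.
Proof.
apply/leq_sizeP => j hj; rewrite coef_mulT; case: j hj => [//|j] hj.
by rewrite !nth_default ?rmorph0 ?delta0 ?addr0 // ltnW.
Qed.

Lemma mulTD (p q : {poly K}) : mT (p + q) = mT p + mT q.
Proof.
apply/polyP => i; rewrite coefD !coef_mulT coefD deltaD.
by case: i => [|i]; rewrite ?coefD ?rmorphD ?add0r // addrACA.
Qed.

Lemma mulT0 : mT 0 = 0.
Proof. by apply: (addrI (mT 0)); rewrite -mulTD !addr0. Qed.

Lemma mulT1 : mT 1 = 'X.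
Proof.
apply/polyP => i; rewrite coef_mulT coef1 coefX.
by case: i => [|[|i]] /=; rewrite ?coef1 /= ?rmorph1 ?rmorph0 ?delta0 ?delta1 ?addr0 ?add0r.
Qed.

Lemma mulT_polyCM (k : K) (p : {poly K}) :
  mT (k%:P * p) = (sigma k)%:P * mT p + (delta k)%:P * p.
Proof.
apply/polyP => i; rewrite coef_mulT coefD !coefCM coef_mulT ?coefCM deltaM.
by case: i => [|i]; rewrite ?coefCM ?rmorphM ?mulr0 ?add0r // mulrDr addrA.
Qed.

Lemma iter_mulT1 i : iter i mT 1 = 'X^i.
Proof.
elim: i => [|i IHi] //=; rewrite IHi /mulT map_polyXn exprSr.
suff -> : map_poly delta 'X^i = 0 by rewrite addr0.
apply/polyP => j; rewrite coef_map_id0 ?delta0 // coefXn coef0.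
by case: (j == i); rewrite ?delta0 ?delta1.
Qed.

Lemma skmul_widen m (q r : {poly K}) : (size q <= m)%N ->
  skm q r = \sum_(i < m) (q`_i)%:P * iter i mT r.
Proof.
move=> qm; rewrite /skmul (big_ord_widen _ (fun i : nat => (q`_i)%:P * iter i mT r) qm).
rewrite big_mkcond /=; apply: eq_bigr => i _; case: ifP => // /negbT.
by rewrite -leqNgt => qi; rewrite nth_default // mul0r.
Qed.

Lemma skmul0l (r : {poly K}) : skm 0 r = 0.
Proof. by rewrite /skmul size_poly0 big_ord0. Qed.

Lemma skmulDl (q1 q2 r : {poly K}) : skm (q1 + q2) r = skm q1 r + skm q2 r.
Proof.
rewrite !(@skmul_widen (maxn (size q1) (size q2))) ?size_polyD ?leq_maxl ?leq_maxr //.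
by rewrite -big_split; apply: eq_bigr => i _; rewrite coefD polyCD mulrDl.
Qed.

Lemma skmulBl (q1 q2 r : {poly K}) : skm (q1 - q2) r = skm q1 r - skm q2 r.
Proof. by apply: (addIr (skm q2 r)); rewrite -skmulDl !subrK. Qed.

Lemma skmul_suml (I : Type) (s : seq I) (F : I -> {poly K}) r :
  skm (\sum_(i <- s) F i) r = \sum_(i <- s) skm (F i) r.
Proof. exact: (big_morph _ (fun x y => skmulDl x y r) (skmul0l r)). Qed.

Lemma skmul_polyCMl (k : K) (q r : {poly K}) : skm (k%:P * q) r = k%:P * skm q r.
Proof.
rewrite !(@skmul_widen (size q)) //; last first.
  by apply/leq_sizeP => j qj; rewrite coefCM nth_default ?mulr0.
by rewrite mulr_sumr; apply: eq_bigr => i _; rewrite coefCM polyCM mulrA.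
Qed.

Lemma skmul_polyCl (k : K) (r : {poly K}) : skm k%:P r = k%:P * r.
Proof. by rewrite (@skmul_widen 1) ?size_polyC_leq1 // big_ord1 coefC. Qed.

Lemma mulT_skmul (q r : {poly K}) : mT (skm q r) = skm (mT q) r.
Proof.
rewrite (@skmul_widen (size q).+1 q) // (@skmul_widen (size q).+1 (mT q)) ?size_mulT //.
rewrite (big_morph _ mulTD mulT0).
rewrite (eq_bigr (fun i : 'I_(size q).+1 => (sigma q`_i)%:P * iter i.+1 mT r
   + (delta q`_i)%:P * iter i mT r)) => [|i _]; last by rewrite mulT_polyCM.
rewrite [RHS](eq_bigr (fun i : 'I_(size q).+1 =>
   (if nat_of_ord i is j.+1 then sigma q`_j else 0)%:P * iter i mT r
   + (delta q`_i)%:P * iter i mT r)) => [|i _]; last by rewrite coef_mulT polyCD mulrDl.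
rewrite !big_split /=; congr (_ + _).
rewrite big_ord_recr big_ord_recl /= nth_default // rmorph0 !mul0r addr0 add0r.
by apply: eq_bigr.
Qed.

Fixpoint skpow (c : K) i : K :=
  if i is j.+1 then sigma (skpow c j) * c + delta (skpow c j) else 1.

Fixpoint skquo (c : K) i : {poly K} :=
  if i is j.+1 then mT (skquo c j) + (sigma (skpow c j))%:P else 0.

Lemma iter_mulT1_divXsubC (c : K) i :
  iter i mT 1 = skm (skquo c i) ('X - c%:P) + (skpow c i)%:P.
Proof.
elim: i => [|i IHi] /=; first by rewrite skmul0l add0r.
rewrite IHi mulTD mulT_skmul -[(skpow c i)%:P]mulr1 mulT_polyCM mulT1 skmulDl.
rewrite skmul_polyCl mulr1 mulrBr -polyCM polyCD -!addrA; congr (_ + _).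
by rewrite addKr.
Qed.

Lemma skpoly_divXsubC (P : {poly K}) (c : K) :
  P = skm (\sum_(i < size P) (P`_i)%:P * skquo c i) ('X - c%:P)
      + (\sum_(i < size P) P`_i * skpow c i)%:P.
Proof.
rewrite -{1}[P]coefK poly_def skmul_suml rmorph_sum -big_split /=.
apply: eq_bigr => i _.
by rewrite -mul_polyC -iter_mulT1 (iter_mulT1_divXsubC c) mulrDr skmul_polyCMl polyCM.
Qed.

Lemma iter_mulT_XsubC (c : K) i :
  (size (iter i mT ('X - c%:P)%R) <= i.+2)%N /\ (iter i mT ('X - c%:P))`_i.+1 = 1.
Proof.
elim: i => [|i [sz lc]] /=; first by rewrite size_XsubC coefB coefX coefC /= subr0.
split; first exact: leq_trans (size_mulT _) _.
by rewrite coef_mulT lc rmorph1 nth_default ?delta0 ?addr0.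
Qed.

(* the leading coefficient of [u] reappears one degree higher in [u (T - c)] *)
Lemma skmul_XsubC_polyC (u : {poly K}) (k c : K) : skm u ('X - c%:P) = k%:P -> u = 0.
Proof.
apply: contra_eq => u0; have := size_poly_gt0 u; rewrite u0.
case su: (size u) => [//|m] _; apply/eqP.
move/(congr1 (fun p : {poly K} => p`_m.+1)); rewrite coefC /= /skmul su coef_sum.
rewrite big_ord_recr /= coefCM (iter_mulT_XsubC c m).2 mulr1 big1 ?add0r => [|i _].
  by move/eqP; rewrite -lead_coef_eq0 lead_coefE su in u0; rewrite (negbTE u0).
rewrite coefCM [_`_m.+1]nth_default ?mulr0 //.
by apply: leq_trans (iter_mulT_XsubC c i).1 _; rewrite ltnS.
Qed.

Lemma skevalE (P : {poly K}) (c : K) :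
  skeval sigma delta P c = \sum_(i < size P) P`_i * skpow c i.
Proof.
have P0 := skpoly_divXsubC P c.
set q0 := \sum_(i < _) _ in P0; set r0 := \sum_(i < _) _ in P0 *.
have [q Pq] : exists q, P = skm q ('X - c%:P) + (skeval sigma delta P c)%:P.
  apply: (epsilon_spec _ (fun r => exists q, P = skm q ('X - c%:P) + r%:P)).
  by exists r0, q0.
have : skm (q - q0) ('X - c%:P) = (r0 - skeval sigma delta P c)%:P.
  rewrite skmulBl polyCB -[skm q _](addrK (skeval sigma delta P c)%:P) -Pq {1}P0.
  by rewrite addrAC [X in X - _]addrC addKr.
move/skmul_XsubC_polyC/eqP; rewrite subr_eq0 => /eqP qq0.
by move: Pq; rewrite qq0 {1}P0 => /addrI/polyC_inj.
Qed.

Lemma skpow_skact (a b : K) i : b != 0 -> skpow (skact b a) i * b = iter i (pseudo_lin a) b.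
Proof.
move=> b0; elim: i => [|i IHi] /=; first by rewrite mul1r.
have ab : skact b a * b = pseudo_lin a b by rewrite /skact -mulrDl divrK ?unit_skew.
by rewrite -IHi /pseudo_lin rmorphM deltaM mulrDl -mulrA ab mulrDr !mulrA addrA.
Qed.

Definition orbit_map (P : {poly K}) (a b : K) : K := skeval sigma delta P (skact b a) * b.

Lemma orbit_mapE (P : {poly K}) (a b : K) :
  orbit_map P a b = \sum_(i < size P) P`_i * iter i (pseudo_lin a) b.
Proof.
rewrite /orbit_map; case: (eqVneq b 0) => [->|b0].
  by rewrite mulr0 big1 // => i _; rewrite iter_pseudo_lin0 mulr0.
by rewrite skevalE mulr_suml; apply: eq_bigr => i _; rewrite -mulrA skpow_skact.
Qed.

Lemma orbit_mapD (P : {poly K}) (a x y : K) :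
  orbit_map P a (x + y) = orbit_map P a x + orbit_map P a y.
Proof.
rewrite !orbit_mapE -big_split; apply: eq_bigr => i _.
by rewrite iter_pseudo_linD mulrDr.
Qed.

Lemma orbit_mapC (P : {poly K}) (a x c : K) :
  in_C sigma delta a c -> orbit_map P a (x * c) = orbit_map P a x * c.
Proof.
rewrite /orbit_map; case: (eqVneq x 0) => [->|x0]; first by rewrite mul0r !mulr0 mul0r.
by case=> [[c0 ca]|->]; rewrite ?mulr0 // -skactM // ca mulrA.
Qed.

Lemma orbit_map_eq0 (P : {poly K}) (a x : K) :
  (forall c, in_Delta a c -> skeval sigma delta P c != 0) ->
  orbit_map P a x = 0 -> x = 0.
Proof.
move=> P_neq0; apply: contra_eq => x0.
by apply: mulf_skew_neq0 => //; apply: P_neq0; exists x.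
Qed.

Lemma orbit_map_inj (P : {poly K}) (a : K) :
  (forall c, in_Delta a c -> skeval sigma delta P c != 0) ->
  injective (orbit_map P a).
Proof.
move=> P_neq0 x y xy; apply/eqP; rewrite -subr_eq0; apply/eqP.
apply: (orbit_map_eq0 P_neq0); apply: (addIr (orbit_map P a y)).
by rewrite -orbit_mapD subrK add0r.
Qed.

End SkewPolynomialRing.

Unset Implicit Arguments.
Set Strict Implicit.

Theorem proposition3p4 (K : unitRingType) (sigma : {rmorphism K -> K}) (delta : K -> K)
  (HK : is_skew_field K) (Hdelta : is_sigma_derivation sigma delta) (a : K)
  (Hfin : right_findim_over (in_C sigma delta a))
  (P Q : {poly K}) (Hmin : minimal_rep sigma delta P Q) :
  defined_at sigma delta P a <->
  (forall c : K, in_Delta sigma delta a c -> skeval sigma delta P c != 0).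
Proof.
split; first exact: skew_invertible_neq0.
move=> P_neq0; pose lam := orbit_map sigma delta P a.
have lam_surj : forall y, exists x, lam x = y.
  apply: (findim_injective_surjective HK _ _ _ _ _ _ (orbit_mapD HK Hdelta P a)
    (orbit_mapC HK Hdelta P (a := a)) (fun x => orbit_map_eq0 HK P_neq0) Hfin);
  by [exact: in_C0 | exact: in_C1 | exact: in_CD | exact: in_CN | exact: in_CM | exact: in_CV].
apply: (skew_invertible_of_orbit HK Hdelta P_neq0) => [x y _ _ | y y0].
  exact: (orbit_map_inj HK Hdelta P_neq0).
have [x lamx] := lam_surj y; exists x => //.
by apply: contra_neq y0 => x0; rewrite -lamx x0 /lam /orbit_map mulr0.
Qed.
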